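(* Fix a positive integer $n$ and two partitions $\Lambda_w$ and $\Lambda_b$ of $n$. Then $$\sum_{T\in\mathbf{W}_{\Lambda_w,\Lambda_b}}\omega(T)-\sum_{T\in\mathbf{B}_{\Lambda_w,\Lambda_b}}\omega(T)=0.$$
   Context: A black and white tree is a finite tree embedded in $\mathbb{C}$ whose vertices are colored black and white so that adjacent vertices have different colors. It is real if it is invariant (including colors) under complex conjugation. Two real trees are isomorphic if one is carried to the other by a homeomorphism of $\mathbb{C}$ commuting with complex conjugation and preserving the orientation of the real axis (and the colors); trees are considered up to isomorphism. The real vertices of a real tree $T$ are its vertices on $\mathbb{R}$; the real part sequence of $T$ is the sequence of (color, degree) of the real vertices from left to right; the first and last real vertices are the border vertices. The weight $\omega(T)$: if the real part sequence is not symmetric (not a palindrome), $\omega(T)=0$; if $T$ has only one real vertex, $\omega(T)=1$; if the real part sequence is symmetric, $T$ has more than one real vertex and the middle real vertex has the same color as the border vertices, $\omega(T)=-1$; if it is symmetric, with more than one real vertex, and the middle real vertex has a different color from the border vertices, $\omega(T)=1$. $T$ is white side (resp. black side) if its rightmost real vertex is white (resp. black). $\mathbf{W}_{\Lambda_w,\Lambda_b}$ (resp. $\mathbf{B}_{\Lambda_w,\Lambda_b}$) is the set of isomorphism classes of white side (resp. black side) real trees with white vertex degrees $\Lambda_w$ and black vertex degrees $\Lambda_b$. *)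

From mathcomp Require Import all_boot all_order all_algebra.
From Stdlib Require List.
Set Implicit Arguments. Unset Strict Implicit. Unset Printing Implicit Defensive.
Import GRing.Theory Num.Theory.

Definition white : bool := true.
Definition black : bool := false.

(* A planted plane tree lying in the open upper half-plane: a node together
   with the (counterclockwise ordered) list of subtrees hanging from it. *)
Inductive ptree := PNode of seq ptree.

(* A real tree up to isomorphism: the colour of the leftmost real vertex, and
   for each real vertex (left to right, there is at least one) the ordered
   list of planted plane trees attached to it in the upper half-plane
   (ordered counterclockwise, from the positive real direction).  The lower
   half-plane part is the complex conjugate. *)
Record rtree := RTree {
  rt_col : bool;
  rt_first : seq ptree;
  rt_rest : seq (seq ptree)
}.

Definition rforests (T : rtree) : seq (seq ptree) := rt_first T :: rt_rest T.
Definition rsize (T : rtree) : nat := size (rforests T).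
Definition rforest (T : rtree) (i : nat) : seq ptree := nth [::] (rforests T) i.
Definition rcol (T : rtree) (i : nat) : bool := rt_col T (+) odd i.
(* degree of the i-th real vertex: real neighbours + upper and lower edges *)
Definition rdeg (T : rtree) (i : nat) : nat :=
  (0 < i) + (i < (rsize T).-1) + 2 * size (rforest T i).

(* (colour, degree) of the vertices of a planted tree whose root has colour col;
   the root's degree counts the edge to its parent. *)
Fixpoint pdegs (col : bool) (t : ptree) : seq (bool * nat) :=
  let: PNode ch := t in
  (col, (size ch).+1) :: flatten [seq pdegs (~~ col) c | c <- ch].

Definition real_part_seq (T : rtree) : seq (bool * nat) :=
  [seq (rcol T i, rdeg T i) | i <- iota 0 (rsize T)].

Definition upper_vertices (T : rtree) : seq (bool * nat) :=
  flatten [seq flatten [seq pdegs (~~ rcol T i) t | t <- rforest T i]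
          | i <- iota 0 (rsize T)].

(* all vertices: real ones, upper ones, and their complex conjugates *)
Definition all_vertices (T : rtree) : seq (bool * nat) :=
  real_part_seq T ++ upper_vertices T ++ upper_vertices T.

Definition white_degrees (T : rtree) : seq nat :=
  [seq p.2 | p <- all_vertices T & p.1 == white].
Definition black_degrees (T : rtree) : seq nat :=
  [seq p.2 | p <- all_vertices T & p.1 == black].

Definition white_side (T : rtree) : bool := rcol T (rsize T).-1 == white.
Definition black_side (T : rtree) : bool := rcol T (rsize T).-1 == black.

Definition omega (T : rtree) : int :=
  let s := real_part_seq T in
  if s != rev s then 0%R
  else if size s == 1 then 1%R
  else if (nth (white, 0) s (size s)./2).1 == (nth (white, 0) s 0).1
       then (-1)%R else 1%R.

Definition is_partition (n : nat) (l : seq nat) : bool :=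
  [&& all (fun x => 0 < x) l, sorted geq l & sumn l == n].

Definition in_W (Lw Lb : seq nat) (T : rtree) : Prop :=
  [/\ white_side T, perm_eq (white_degrees T) Lw & perm_eq (black_degrees T) Lb].
Definition in_B (Lw Lb : seq nat) (T : rtree) : Prop :=
  [/\ black_side T, perm_eq (white_degrees T) Lw & perm_eq (black_degrees T) Lb].

From mathcomp Require Import all_boot all_order all_algebra.
From Stdlib Require List Permutation.
From mathcomp Require Import zify.
Import GRing.Theory Num.Theory.

(* Weigh white side trees by +omega and black side trees by -omega.  This
   signed weight vanishes unless the real part sequence is a palindrome; it is
   then +s(T) if T has a single real vertex and -s(T) otherwise, where s(T) is
   +1 or -1 according to the colour of the middle real vertex.  A palindromic
   tree with 2k+1 > 1 real vertices is folded at its middle vertex: the two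
   real vertices at distance j from it become one vertex of the upper
   half-plane (plus its conjugate), at depth j of a chain hanging from the
   middle vertex, and carry both of their upper forests.  By mirror symmetry
   the two real vertices have the same degree, which is also the degree of the
   merged one; so folding preserves the colours and degrees of all vertices and
   the middle colour, and it is a bijection onto the trees with a single real
   vertex of positive degree.  Hence the two kinds of contributions cancel. *)

Lemma big_nat_centered (R : Type) (idx : R) (op : Monoid.com_law idx) n (f : nat -> R) :
  \big[op/idx]_(0 <= i < (n + n).+1) f i
  = op (f n) (\big[op/idx]_(0 <= j < n) op (f (n - j.+1)) (f (n + j.+1))).
Proof.
rewrite (big_cat_nat (leq0n n) (_ : n <= (n + n).+1)); last by lia.
rewrite (big_cat_nat (leqnSn n) (_ : n.+1 <= (n + n).+1)); last by lia.
rewrite big_nat1 big_nat_rev add0n -{1}[n.+1]add0n big_addn.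
rewrite (_ : (n + n).+1 - n.+1 = n); last by lia.
rewrite big_split Monoid.mulmCA; congr (op _ (op _ _)).
by apply: eq_bigr => j _; rewrite addnC addSnnS.
Qed.

Lemma big_Permutation [R : Type] [idx : R] [op : Monoid.com_law idx] [I : Type]
    [s t : seq I] (F : I -> R) :
  Permutation.Permutation s t -> \big[op/idx]_(i <- s) F i = \big[op/idx]_(i <- t) F i.
Proof.
elim=> [|x s' t' _ IH|x y s'|s1 s2 s3 _ IH1 _ IH2]; rewrite ?big_cons ?IH //.
  by rewrite Monoid.mulmCA.
by rewrite IH1 IH2.
Qed.

Lemma eq_big_In [R : Type] [idx : R] [op : R -> R -> R] [I : Type] [s : seq I] (F G : I -> R) :
  (forall i, List.In i s -> F i = G i) ->
  \big[op/idx]_(i <- s) F i = \big[op/idx]_(i <- s) G i.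
Proof.
elim: s => [|x s IH] eqFG; first by rewrite !big_nil.
rewrite !big_cons eqFG /=; last by left.
by rewrite IH // => i s_i; apply: eqFG; right.
Qed.

Definition forest_vertices (c : bool) (F : seq ptree) : seq (bool * nat) :=
  flatten [seq pdegs c t | t <- F].

Lemma forest_vertices_cat c F1 F2 :
  forest_vertices c (F1 ++ F2) = forest_vertices c F1 ++ forest_vertices c F2.
Proof. by rewrite /forest_vertices map_cat flatten_cat. Qed.

Definition vertex_count (T : rtree) (x : bool * nat) (i : nat) : nat :=
  ((rcol T i, rdeg T i) == x)
  + 2 * count_mem x (forest_vertices (~~ rcol T i) (rforest T i)).

Lemma count_all_vertices T x :
  count_mem x (all_vertices T) = \sum_(0 <= i < rsize T) vertex_count T x i.
Proof.
have count_real : count_mem x (real_part_seq T)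
    = \sum_(0 <= i < rsize T) ((rcol T i, rdeg T i) == x).
  by rewrite count_map -sumn_count sumnE big_map /index_iota subn0.
have count_upper : count_mem x (upper_vertices T)
    = \sum_(0 <= i < rsize T) count_mem x (forest_vertices (~~ rcol T i) (rforest T i)).
  by rewrite count_flatten sumnE !big_map /index_iota subn0.
rewrite /all_vertices count_cat count_real count_cat count_upper -!big_split /=.
by apply: eq_bigr => i _; rewrite addnn -mul2n.
Qed.

Notation arm := (seq ptree * seq ptree)%type.
Definition empty_arm : arm := ([::], [::]).

Definition balanced (h : seq arm) : bool := all (fun p => size p.1 == size p.2) h.

Fixpoint fold_arms (h : seq arm) : ptree :=
  match h with
  | [::] => PNode [::]
  | [:: p] => PNode (p.1 ++ p.2)
  | p :: h' => PNode (fold_arms h' :: p.1 ++ p.2)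
  end.

Definition split_half (F : seq ptree) : arm := (take (size F)./2 F, drop (size F)./2 F).

(* Balanced arms contribute an even number of children, so an odd number of
   children means that the first child continues the chain. *)
Fixpoint unfold_arms (t : ptree) : seq arm :=
  let: PNode ch := t in
  if odd (size ch) then
    if ch is t' :: F then split_half F :: unfold_arms t' else [::]
  else [:: split_half ch].

Lemma split_half_cat L R : size L = size R -> split_half (L ++ R) = (L, R).
Proof.
by move=> eqLR; rewrite /split_half size_cat -eqLR addnn half_double take_size_cat ?drop_size_cat.
Qed.

Lemma split_half_balanced F : ~~ odd (size F) -> size (split_half F).1 == size (split_half F).2.
Proof.
move=> evenF; have := odd_double_half (size F); rewrite (negbTE evenF) add0n -addnn => eF.
by rewrite /= size_drop size_takel -{2}eF ?addnK ?leq_addr.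
Qed.

Lemma fold_armsK h : 0 < size h -> balanced h -> unfold_arms (fold_arms h) = h.
Proof.
elim: h => [|p [|q h] IH] //= _ /andP[/eqP eq_p bal_h].
  by rewrite size_cat -eq_p addnn odd_double split_half_cat // -surjective_pairing.
by rewrite size_cat -eq_p addnn odd_double split_half_cat // -surjective_pairing IH.
Qed.

Lemma size_unfold_arms_gt0 t : 0 < size (unfold_arms t).
Proof. by case: t => [[|t' F]] //=; case: ifP. Qed.

Lemma unfold_arms_balanced : forall t, balanced (unfold_arms t).
Proof.
fix IH 1 => -[ch] /=; case: ifP => odd_ch.
  case: ch odd_ch => [|t' F] //= odd_F.
  by rewrite /= IH andbT; apply: split_half_balanced.
by rewrite /= andbT; apply: split_half_balanced; rewrite odd_ch.
Qed.

Lemma unfold_armsK : forall t, fold_arms (unfold_arms t) = t.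
Proof.
fix IH 1 => -[ch] /=; case: ifP => odd_ch.
  case: ch odd_ch => [|t' F] //= _.
  have := IH t'; have := size_unfold_arms_gt0 t'.
  by case: (unfold_arms t') => [|q h] //= _ ->; rewrite cat_take_drop.
by rewrite /= cat_take_drop.
Qed.

Definition arm_count (c : bool) (h : seq arm) (x : bool * nat) (j : nat) : nat :=
  let p := nth empty_arm h j in
  ((c (+) odd j, (j.+1 < size h) + (size p.1 + size p.2).+1) == x)
  + count_mem x (forest_vertices (~~ (c (+) odd j)) (p.1 ++ p.2)).

Lemma count_pdegs_fold_arms c h x : 0 < size h ->
  count_mem x (pdegs c (fold_arms h)) = \sum_(0 <= j < size h) arm_count c h x j.
Proof.
elim: h c => [|p [|q h] IH] c // _.
  by rewrite big_nat1 /arm_count /= addbF size_cat.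
rewrite big_nat_recl // (eq_bigr (arm_count (~~ c) (q :: h) x)); last first.
  by move=> j _; rewrite /arm_count /= addbN -addNb.
rewrite -IH // /arm_count /= addbF size_cat.
by rewrite count_cat add1n -addnA [count_mem x (forest_vertices _ _) + _]addnC.
Qed.

(* The real vertices of [centered_tree cm F h] are numbered -k..k (k = size h)
   from left to right; vertex 0 has colour cm and upper forest F, and the j-th
   arm of h holds the upper forests of the vertices -(j+1) and j+1. *)
Definition centered_forests (F : seq ptree) (h : seq arm) : seq (seq ptree) :=
  rev (map fst h) ++ F :: map snd h.

Definition centered_tree (cm : bool) (F : seq ptree) (h : seq arm) : rtree :=
  RTree (cm (+) odd (size h)) (head [::] (centered_forests F h))
        (behead (centered_forests F h)).

Section CenteredTree.
Variables (cm : bool) (F : seq ptree) (h : seq arm).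
Local Notation T := (centered_tree cm F h).

Lemma rforests_centered : rforests T = centered_forests F h.
Proof. by rewrite /rforests /centered_tree /centered_forests /=; case: (rev _). Qed.

Lemma rsize_centered : rsize T = (size h + size h).+1.
Proof.
by rewrite /rsize rforests_centered /centered_forests size_cat /= size_rev !size_map addnS.
Qed.

Lemma rforest_centered_mid : rforest T (size h) = F.
Proof.
by rewrite /rforest rforests_centered /centered_forests nth_cat size_rev size_map ltnn subnn.
Qed.

Lemma rforest_centered_left j : j < size h -> rforest T (size h - j.+1) = (nth empty_arm h j).1.
Proof.
move=> lt_j; rewrite /rforest rforests_centered /centered_forests nth_cat size_rev size_map.
rewrite ifT; last by lia.
by rewrite nth_rev size_map ?subnSK ?subKn ?(nth_map empty_arm) //; lia.
Qed.

Lemma rforest_centered_right j : j < size h -> rforest T (size h + j.+1) = (nth empty_arm h j).2.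
Proof.
move=> lt_j; rewrite /rforest rforests_centered /centered_forests nth_cat size_rev size_map.
rewrite ifF; last by lia.
by rewrite addKn /= (nth_map empty_arm).
Qed.

Lemma rcol_centered_mid : rcol T (size h) = cm.
Proof. by rewrite /rcol /= addbK. Qed.

Lemma rcol_centered_left j : j < size h -> rcol T (size h - j.+1) = ~~ cm (+) odd j.
Proof.
by move=> lt_j; rewrite /rcol /= oddB //=; case: cm; case: (odd (size h)); case: (odd j).
Qed.

Lemma rcol_centered_right j : rcol T (size h + j.+1) = ~~ cm (+) odd j.
Proof. by rewrite /rcol /= oddD /=; case: cm; case: (odd (size h)); case: (odd j). Qed.

Lemma rdeg_centered_mid : 0 < size h -> rdeg T (size h) = 2 + 2 * size F.
Proof.
move=> h_gt0; rewrite /rdeg rsize_centered rforest_centered_mid h_gt0 /=.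
by rewrite -[X in X < _]addn0 ltn_add2l h_gt0.
Qed.

Lemma rdeg_centered_left j : j < size h ->
  rdeg T (size h - j.+1) = (j.+1 < size h) + 1 + 2 * size (nth empty_arm h j).1.
Proof.
move=> lt_j; rewrite /rdeg rsize_centered rforest_centered_left // subn_gt0.
by rewrite (_ : _ - _ < _ + _); last lia.
Qed.

Lemma rdeg_centered_right j : j < size h ->
  rdeg T (size h + j.+1) = (j.+1 < size h) + 1 + 2 * size (nth empty_arm h j).2.
Proof.
move=> lt_j; rewrite /rdeg rsize_centered rforest_centered_right // ltn_add2l.
rewrite addnS ltn0Sn; lia.
Qed.

End CenteredTree.

Definition palindromic (T : rtree) : bool := real_part_seq T == rev (real_part_seq T).

Lemma size_real_part_seq T : size (real_part_seq T) = rsize T.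
Proof. by rewrite size_map size_iota. Qed.

Lemma nth_real_part_seq T i : i < rsize T ->
  nth (white, 0) (real_part_seq T) i = (rcol T i, rdeg T i).
Proof. by move=> lt_i; rewrite (nth_map 0) ?size_iota // nth_iota. Qed.

Lemma palindromicP T : reflect (forall i, i < rsize T ->
   (rcol T i, rdeg T i) = (rcol T (rsize T - i.+1), rdeg T (rsize T - i.+1)))
  (palindromic T).
Proof.
apply: (iffP eqP) => [E i lt_i | mirror].
  by rewrite -nth_real_part_seq // E nth_rev size_real_part_seq // nth_real_part_seq //; lia.
apply: (eq_from_nth (x0 := (white, 0))); first by rewrite size_rev.
move=> i; rewrite size_real_part_seq => lt_i.
rewrite nth_rev size_real_part_seq // nth_real_part_seq // mirror // nth_real_part_seq //; lia.
Qed.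

Lemma palindromic_odd T : palindromic T -> odd (rsize T).
Proof.
move/palindromicP/(_ 0 (ltn0Sn _)) => [].
rewrite /rcol /rsize /rforests /= subn1 /=.
by case: (rt_col T); case: (odd (size (rt_rest T))).
Qed.

Lemma palindromic_centered cm F h : palindromic (centered_tree cm F h) = balanced h.
Proof.
set T := centered_tree cm F h.
have mirror_left j : j < size h -> rsize T - (size h - j.+1).+1 = size h + j.+1.
  by rewrite rsize_centered; lia.
have mirror_right j : j < size h -> rsize T - (size h + j.+1).+1 = size h - j.+1.
  by rewrite rsize_centered; lia.
have arm_mirror j : j < size h ->
    (rcol T (size h - j.+1), rdeg T (size h - j.+1))
      = (rcol T (size h + j.+1), rdeg T (size h + j.+1))
    <-> size (nth empty_arm h j).1 = size (nth empty_arm h j).2.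
  move=> lt_j; rewrite rcol_centered_left // rcol_centered_right //.
  by rewrite rdeg_centered_left // rdeg_centered_right //; split => [[]|->] //; lia.
apply/palindromicP/(all_nthP empty_arm) => [mirror j lt_j | bal i].
  apply/eqP/arm_mirror; rewrite // -mirror_left // mirror // rsize_centered; lia.
rewrite {1}rsize_centered => lt_i.
have [lt_ih | gt_ih | ->] := ltngtP i (size h).
- have [j lt_j ->] : exists2 j, j < size h & i = size h - j.+1.
    by exists (size h - i.+1); lia.
  by rewrite mirror_left //; apply/arm_mirror/eqP/bal.
- have [j lt_j ->] : exists2 j, j < size h & i = size h + j.+1.
    by exists (i - (size h).+1); lia.
  by rewrite mirror_right //; symmetry; apply/arm_mirror/eqP/bal.
- by rewrite rsize_centered (_ : _ - _ = size h) //; lia.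
Qed.

Lemma vertex_count_centered_mirror cm F h x j : j < size h -> balanced h ->
  vertex_count (centered_tree cm F h) x (size h - j.+1)
  + vertex_count (centered_tree cm F h) x (size h + j.+1) = 2 * arm_count (~~ cm) h x j.
Proof.
move=> lt_j /(all_nthP empty_arm)/(_ j lt_j)/eqP eq_sizes.
rewrite /vertex_count /arm_count rcol_centered_left // rcol_centered_right //.
rewrite rdeg_centered_left // rdeg_centered_right // rforest_centered_left //.
rewrite rforest_centered_right // -eq_sizes forest_vertices_cat count_cat.
set L := (nth empty_arm h j).1.
rewrite (_ : (size L + size L).+1 = 1 + 2 * size L) ?addnA; last by lia.
lia.
Qed.

Lemma all_vertices_fold_arms cm F h : 0 < size h -> balanced h ->
  perm_eq (all_vertices (RTree cm (fold_arms h :: F) [::]))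
          (all_vertices (centered_tree cm F h)).
Proof.
move=> h_gt0 bal; set T := RTree _ _ _.
have rforest_T : rforest T 0 = fold_arms h :: F by [].
have rdeg_T : rdeg T 0 = 2 + 2 * size F by rewrite /rdeg rforest_T /= mulnS.
have rcol_T : rcol T 0 = cm by rewrite /rcol addbF.
apply/allP => x _; apply/eqP.
rewrite !count_all_vertices [in RHS]rsize_centered [in RHS]big_nat_centered big_nat1 /=.
under eq_big_nat => j /andP[_ lt_j] do rewrite vertex_count_centered_mirror //.
rewrite /vertex_count rcol_centered_mid rdeg_centered_mid // rforest_centered_mid.
rewrite rforest_T rdeg_T rcol_T.
rewrite (_ : forest_vertices _ _ = pdegs (~~ cm) (fold_arms h) ++ forest_vertices (~~ cm) F) //.
by rewrite count_cat count_pdegs_fold_arms // -big_distrr /=; lia.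
Qed.

Definition mid (T : rtree) : nat := (rsize T)./2.
Definition mid_col (T : rtree) : bool := rcol T (mid T).
Definition mid_forest (T : rtree) : seq ptree := rforest T (mid T).
Definition arms (T : rtree) : seq arm :=
  zip (rev (take (mid T) (rforests T))) (drop (mid T).+1 (rforests T)).

Lemma rsize_mid T : odd (rsize T) -> rsize T = (mid T + mid T).+1.
Proof. by move=> odd_T; rewrite -[LHS]odd_double_half odd_T -addnn. Qed.

Lemma size_arms T : odd (rsize T) -> size (arms T) = mid T.
Proof.
move/(rsize_mid T); rewrite /arms /rsize => size_T.
by rewrite size_zip size_rev size_drop size_takel size_T; lia.
Qed.

Lemma centered_mid T : odd (rsize T) -> centered_tree (mid_col T) (mid_forest T) (arms T) = T.
Proof.
move=> odd_T; have := rsize_mid T odd_T; rewrite /rsize => size_T.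
have size_take : size (take (mid T) (rforests T)) = mid T by rewrite size_takel // size_T; lia.
have size_drop : size (drop (mid T).+1 (rforests T)) = mid T by rewrite size_drop size_T; lia.
have fst_arms : map fst (arms T) = rev (take (mid T) (rforests T)).
  by apply: unzip1_zip; rewrite size_rev size_take size_drop.
have snd_arms : map snd (arms T) = drop (mid T).+1 (rforests T).
  by apply: unzip2_zip; rewrite size_rev size_take size_drop.
rewrite /centered_tree /centered_forests size_arms // fst_arms snd_arms revK.
rewrite /mid_forest /rforest -drop_nth ?cat_take_drop; last by rewrite size_T; lia.
by rewrite /mid_col /rcol addbK; case: T {odd_T size_T size_take size_drop fst_arms snd_arms}.
Qed.

Lemma mid_centered cm F h : mid (centered_tree cm F h) = size h.
Proof. by rewrite /mid rsize_centered addnn; apply: (half_bit_double _ true). Qed.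

Definition fold_tree (T : rtree) : rtree :=
  RTree (mid_col T) (fold_arms (arms T) :: mid_forest T) [::].

Definition unfold_tree (T : rtree) : rtree :=
  centered_tree (rt_col T) (behead (rt_first T)) (unfold_arms (head (PNode [::]) (rt_first T))).

Lemma fold_tree_centered cm F h :
  fold_tree (centered_tree cm F h) = RTree cm (fold_arms h :: F) [::].
Proof.
rewrite /fold_tree /mid_col /mid_forest /arms mid_centered rcol_centered_mid.
rewrite rforest_centered_mid rforests_centered /centered_forests.
rewrite take_size_cat ?size_rev ?size_map // -cat_rcons.
by rewrite drop_size_cat ?size_rcons ?size_rev ?size_map // revK zip_unzip.
Qed.

Definition one_real_vertex (T : rtree) : bool := rsize T == 1.
Definition long_palindrome (T : rtree) : bool := palindromic T && (1 < rsize T).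
Definition middle_sign (T : rtree) : int := if mid_col T == white then 1%R else (-1)%R.
Definition signed_omega (T : rtree) : int := if white_side T then omega T else (- omega T)%R.

Lemma signed_omegaE T : signed_omega T =
  ((if one_real_vertex T then middle_sign T else 0)
   - (if long_palindrome T then middle_sign T else 0))%R.
Proof.
rewrite /signed_omega /omega -/(palindromic T) size_real_part_seq.
rewrite /one_real_vertex /long_palindrome /middle_sign /mid_col /mid /white_side.
have [size1 | size_neq1] := eqVneq (rsize T) 1.
  have pal_T : palindromic T by apply/palindromicP => -[|i]; rewrite size1.
  by rewrite pal_T size1 /=; case: (rcol T 0).
have size_gt1 : 1 < rsize T by rewrite ltn_neqAle eq_sym size_neq1.
have [pal_T | npal_T] := boolP (palindromic T); last first.
  by rewrite /= subr0 oppr0 if_same.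
have [first_last _] := palindromicP T pal_T 0 (ltnW size_gt1).
rewrite subn1 in first_last; rewrite size_gt1 !nth_real_part_seq -?first_last //; last by lia.
by case: (rcol T 0); case: (rcol T (rsize T)./2); rewrite /= ?sub0r ?opprK.
Qed.

Lemma long_palindrome_centered T : long_palindrome T ->
  exists cm F h, [/\ T = centered_tree cm F h, 0 < size h & balanced h].
Proof.
case/andP => pal_T size_gt1; have odd_T := palindromic_odd T pal_T.
have T_eq := centered_mid T odd_T.
exists (mid_col T), (mid_forest T), (arms T); split => //.
  by rewrite size_arms //; have := rsize_mid T odd_T; lia.
by rewrite -(palindromic_centered (mid_col T) (mid_forest T)) T_eq.
Qed.

Lemma long_palindrome_centered_tree cm F h :
  0 < size h -> balanced h -> long_palindrome (centered_tree cm F h).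
Proof.
by move=> h_gt0 bal; rewrite /long_palindrome palindromic_centered bal rsize_centered /=; lia.
Qed.

Lemma unfold_fold_tree T : long_palindrome T -> unfold_tree (fold_tree T) = T.
Proof.
case/long_palindrome_centered => cm [F [h [-> h_gt0 bal]]].
by rewrite fold_tree_centered /unfold_tree /= fold_armsK.
Qed.

Lemma all_vertices_fold_tree T : long_palindrome T ->
  perm_eq (all_vertices (fold_tree T)) (all_vertices T).
Proof.
case/long_palindrome_centered => cm [F [h [-> h_gt0 bal]]].
by rewrite fold_tree_centered all_vertices_fold_arms.
Qed.

Lemma middle_sign_fold_tree T : long_palindrome T -> middle_sign (fold_tree T) = middle_sign T.
Proof.
case/long_palindrome_centered => cm [F [h [-> _ _]]].
by rewrite fold_tree_centered /middle_sign /mid_col mid_centered rcol_centered_mid /rcol addbF.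
Qed.

Lemma fold_unfold_tree T :
  one_real_vertex T -> 0 < size (rt_first T) -> fold_tree (unfold_tree T) = T.
Proof.
case: T => c [|t F] [|? ?] // _ _.
by rewrite /unfold_tree fold_tree_centered unfold_armsK.
Qed.

Lemma long_palindrome_unfold_tree T : long_palindrome (unfold_tree T).
Proof.
exact: long_palindrome_centered_tree (size_unfold_arms_gt0 _) (unfold_arms_balanced _).
Qed.

Section Cancellation.
Variable P : rtree -> Prop.
Hypothesis P_perm : forall T1 T2, perm_eq (all_vertices T1) (all_vertices T2) -> P T1 -> P T2.
Hypothesis P_nontrivial : forall c, ~ P (RTree c [::] [::]).
Variable L : seq rtree.
Hypothesis L_uniq : List.NoDup L.
Hypothesis L_P : forall T, List.In T L <-> P T.

Lemma fold_tree_long_palindromes :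
  Permutation.Permutation (map fold_tree (filter long_palindrome L)) (filter one_real_vertex L).
Proof.
apply: Permutation.NoDup_Permutation => [||T]; last split.
- apply: FinFun.Injective_map_NoDup_in; last exact: List.NoDup_filter.
  move=> T1 T2 /List.filter_In[_ long1] /List.filter_In[_ long2] eq12.
  by rewrite -(unfold_fold_tree _ long1) -(unfold_fold_tree _ long2) eq12.
- exact: List.NoDup_filter.
- case/List.in_map_iff => T' [<- /List.filter_In[/L_P P_T' long_T']].
  apply/List.filter_In; split=> //; apply/L_P; apply: P_perm P_T'.
  by rewrite perm_sym all_vertices_fold_tree.
- case/List.filter_In => /L_P P_T one_T.
  have first_T : 0 < size (rt_first T).
    by case: T one_T P_T => c [|? ?] [|? ?] // _ /P_nontrivial.
  apply/List.in_map_iff; exists (unfold_tree T); split; first exact: fold_unfold_tree.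
  apply/List.filter_In; split; last exact: long_palindrome_unfold_tree.
  apply/L_P; apply: P_perm P_T; rewrite -{1}(fold_unfold_tree _ one_T first_T).
  by rewrite all_vertices_fold_tree ?long_palindrome_unfold_tree.
Qed.

Lemma sum_signed_omega_eq0 : (\sum_(T <- L) signed_omega T = 0)%R.
Proof.
under eq_bigr do rewrite signed_omegaE.
rewrite sumrB -!big_mkcond -!(big_filter L).
rewrite -(big_Permutation _ fold_tree_long_palindromes) big_map.
rewrite (eq_big_In _ middle_sign) ?subrr // => T /List.filter_In[_].
exact: middle_sign_fold_tree.
Qed.

End Cancellation.

Lemma black_sideE T : black_side T = ~~ white_side T.
Proof. by rewrite /black_side /white_side; case: (rcol _ _). Qed.

Lemma sum_omega_sides (LW LB : seq rtree) :
  (forall T, List.In T LW -> white_side T) -> (forall T, List.In T LB -> black_side T) ->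
  (\sum_(T <- LW) omega T - \sum_(T <- LB) omega T
   = \sum_(T <- LW ++ LB) signed_omega T)%R.
Proof.
move=> LW_white LB_black; rewrite big_cat -sumrN /=.
congr (_ + _)%R; apply: eq_big_In => T.
  by move/LW_white; rewrite /signed_omega => ->.
by move/LB_black; rewrite /signed_omega black_sideE => /negbTE ->.
Qed.

Definition has_degrees (Lw Lb : seq nat) (T : rtree) : Prop :=
  perm_eq (white_degrees T) Lw /\ perm_eq (black_degrees T) Lb.

Lemma has_degrees_perm Lw Lb T1 T2 : perm_eq (all_vertices T1) (all_vertices T2) ->
  has_degrees Lw Lb T1 -> has_degrees Lw Lb T2.
Proof.
move=> perm12 [white1 black1]; split.
  by rewrite -(permPl (perm_map _ (perm_filter _ perm12))).
by rewrite -(permPl (perm_map _ (perm_filter _ perm12))).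
Qed.

Lemma has_degrees_single_vertex Lw Lb c :
  all (fun d => 0 < d) Lw -> all (fun d => 0 < d) Lb -> ~ has_degrees Lw Lb (RTree c [::] [::]).
Proof.
move=> posW posB [/perm_mem white_c /perm_mem black_c].
case: c white_c black_c => [white_c _ | _ black_c].
  by have /(allP posW) : 0 \in Lw by rewrite -white_c.
by have /(allP posB) : 0 \in Lb by rewrite -black_c.
Qed.

Theorem lemma3p14 (n : nat) (Lw Lb : seq nat) :
  0 < n -> is_partition n Lw -> is_partition n Lb ->
  forall LW LB : seq rtree,
    List.NoDup LW -> (forall T, List.In T LW <-> in_W Lw Lb T) ->
    List.NoDup LB -> (forall T, List.In T LB <-> in_B Lw Lb T) ->
    ((\sum_(T <- LW) omega T) - (\sum_(T <- LB) omega T) = 0)%R.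
Proof.
move=> _ /and3P[posW _ _] /and3P[posB _ _] LW LB LW_uniq LW_spec LB_uniq LB_spec.
rewrite sum_omega_sides => [|T /LW_spec[] | T /LB_spec[]] //.
apply: (@sum_signed_omega_eq0 (has_degrees Lw Lb)).
- exact: has_degrees_perm.
- by move=> c; apply: has_degrees_single_vertex.
- apply: List.NoDup_app => // T /LW_spec[white_T _ _] /LB_spec[black_T _ _].
  by rewrite black_sideE white_T in black_T.
- move=> T; rewrite List.in_app_iff LW_spec LB_spec /in_W /in_B black_sideE.
  split=> [[[_ white_T black_T] | [_ white_T black_T]] // | [white_T black_T]].
  by case: (boolP (white_side T)); [left | right].
Qed.
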